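(* Let $W$ be an eventually periodic subset of $\mathbb{Z}^d$ with periods $u_1,\dots,u_d$, and let $\mathscr{W}_1,\mathcal{W}$ be as defined in the context. Suppose $\mathscr{W}_1$ contains exactly one element. Then $W$ has a minimal complement in $\mathbb{Z}^d$ if and only if there exists a nonempty finite subset $\mathcal{M}\subseteq\mathbb{Z}^d$ such that: (1) $\pi$ restricted to $\mathcal{M}$ is injective; (2) $\pi(\mathcal{M}+(\mathcal{W}\cup\mathscr{W}_1))=\mathbb{Z}^d/\mathcal{L}$; (3) for every $m\in\mathcal{M}$ there exists $w\in\mathscr{W}_1$ such that $m+w\not\equiv m'+w'\pmod{\mathcal{L}}$ for all $m'\in\mathcal{M}\setminus\{m\}$ and all $w'\in\mathcal{W}\cup\mathscr{W}_1$.
   Context: $d\geqslant1$, $\mathbb{N}=\{0,1,2,\dots\}$. Let $u_1,\dots,u_d\in\mathbb{Z}^d$ satisfy no nontrivial $\mathbb{Z}$-linear relation, $\mathcal{L}=\mathbb{Z}u_1+\dots+\mathbb{Z}u_d$, $P=\mathbb{N}u_1+\dots+\mathbb{N}u_d$, $\pi:\mathbb{Z}^d\to\mathbb{Z}^d/\mathcal{L}$ the quotient map. A nonempty $X\subseteq\mathbb{Z}^d$ is eventually periodic with periods $u_1,\dots,u_d$ if $X\subseteq F+P$ for some nonempty finite $F\subseteq\mathbb{Z}^d$ and $x+P\subseteq X$ for all but finitely many $x\in X$. For such $W$: $\mathscr{W}=\{w\in W:w+P\not\subseteq W\}$; $\mathcal{W}=\{w\in W\setminus\mathscr{W}:(w-P)\cap(W\setminus\mathscr{W})=\{w\}\}$;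 $\mathscr{W}_1$ is the set of elements of $\mathscr{W}$ congruent modulo $\mathcal{L}$ to no element of $\mathcal{W}$. A nonempty $M\subseteq\mathbb{Z}^d$ is a complement of $W$ if $M+W=\mathbb{Z}^d$, and a minimal complement if no proper subset of $M$ is a complement of $W$. *)

From mathcomp Require Import all_boot all_order all_algebra.
Set Implicit Arguments. Unset Strict Implicit. Unset Printing Implicit Defensive.
Import GRing.Theory Num.Theory.
Local Open Scope ring_scope.

(* Z^d is modelled as 'rV[int]_d; subsets of Z^d as predicates 'rV[int]_d -> Prop. *)
Notation vec d := 'rV[int]_d.

Definition Zindep d (u : 'I_d -> vec d) : Prop :=
  forall c : 'I_d -> int, \sum_i c i *: u i = 0 -> forall i, c i = 0.

Definition inL d (u : 'I_d -> vec d) (x : vec d) : Prop :=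
  exists c : 'I_d -> int, x = \sum_i c i *: u i.

Definition inP d (u : 'I_d -> vec d) (x : vec d) : Prop :=
  exists c : 'I_d -> nat, x = \sum_i (c i)%:Z *: u i.

(* x == y mod L, i.e. pi x = pi y *)
Definition congL d (u : 'I_d -> vec d) (x y : vec d) : Prop := inL u (x - y).

Definition finite_set d (X : vec d -> Prop) : Prop :=
  exists s : seq (vec d), forall x, X x <-> x \in s.

Definition nonempty d (X : vec d -> Prop) : Prop := exists x, X x.

Definition eventually_periodic d (u : 'I_d -> vec d) (X : vec d -> Prop) : Prop :=
  nonempty X /\
  (exists F : vec d -> Prop, nonempty F /\ finite_set F /\
     forall x, X x -> exists f p, F f /\ inP u p /\ x = f + p) /\
  finite_set (fun x => X x /\ ~ (forall p, inP u p -> X (x + p))).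

Definition scrW d (u : 'I_d -> vec d) (W : vec d -> Prop) (w : vec d) : Prop :=
  W w /\ ~ (forall p, inP u p -> W (w + p)).

Definition calW d (u : 'I_d -> vec d) (W : vec d -> Prop) (w : vec d) : Prop :=
  W w /\ ~ scrW u W w /\
  forall v, ((exists p, inP u p /\ v = w - p) /\ W v /\ ~ scrW u W v) <-> v = w.

Definition scrW1 d (u : 'I_d -> vec d) (W : vec d -> Prop) (w : vec d) : Prop :=
  scrW u W w /\ forall v, calW u W v -> ~ congL u w v.

Definition is_complement d (W M : vec d -> Prop) : Prop :=
  nonempty M /\ forall z : vec d, exists m w, M m /\ W w /\ z = m + w.

Definition is_minimal_complement d (W M : vec d -> Prop) : Prop :=
  is_complement W M /\
  forall M' : vec d -> Prop, (forall x, M' x -> M x) -> is_complement W M' ->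
    forall x, M x -> M' x.

(* Order Z^d by x <= y iff y - x is in P, and call m coinitial in M when M meets every
   part of the class m + L lying below a given point.  Because W lies in finitely many
   translates f + P, every class mod L is hit by some m + w with m coinitial in the
   complement M; and every element of W is congruent to an element of calW or equals w0.
   If M is minimal, each m has a point m + w covered by no other element of M.  For m
   coinitial, m + w with w congruent to some v in calW is also covered by a point of M
   below m in its class, since v + P lies in W; hence w = w0, and m + w0 is congruent to
   no m' + w' with m' coinitial in another class.  A transversal of the coinitial classes
   (finite, as L has finite index) is the required set.  Conversely, given such a set, its
   union of classes is a complement in which, by (3), x + w0 is covered only by x. *)

From mathcomp Require Import all_boot all_order all_algebra.
From mathcomp Require Import ring zify.
From Stdlib Require Import Classical ClassicalEpsilon FunctionalExtensionality PropExtensionality.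
Set Implicit Arguments. Unset Strict Implicit. Unset Printing Implicit Defensive.
Import GRing.Theory Num.Theory.
Local Open Scope ring_scope.

Ltac vec_ring := apply/rowP => ?; rewrite !mxE; ring.

Section Lattice.
Variables (d : nat) (u : 'I_d -> 'rV[int]_d).

Lemma inL0 : inL u 0.
Proof. by exists (fun _ => 0); rewrite big1 // => i _; rewrite scale0r. Qed.

Lemma inLD x y : inL u x -> inL u y -> inL u (x + y).
Proof.
move=> [a ->] [b ->]; exists (fun i => a i + b i).
by rewrite -big_split; apply: eq_bigr => i _; rewrite scalerDl.
Qed.

Lemma inLN x : inL u x -> inL u (- x).
Proof.
move=> [a ->]; exists (fun i => - a i).
by rewrite -sumrN; apply: eq_bigr => i _; rewrite scaleNr.
Qed.

Lemma inL_gen i : inL u (u i).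
Proof.
exists (fun j => (j == i)%:Z).
by rewrite (bigD1 i) //= eqxx scale1r big1 ?addr0 // => j /negbTE ->; rewrite scale0r.
Qed.

Lemma inP0 : inP u 0.
Proof. by exists (fun _ => 0%N); rewrite big1 // => i _; rewrite scale0r. Qed.

Lemma inPD x y : inP u x -> inP u y -> inP u (x + y).
Proof.
move=> [a ->] [b ->]; exists (fun i => (a i + b i)%N).
by rewrite -big_split; apply: eq_bigr => i _; rewrite PoszD scalerDl.
Qed.

Lemma inP_inL x : inP u x -> inL u x.
Proof. by move=> [a ->]; exists (fun i => (a i)%:Z). Qed.

Lemma congL_refl x : congL u x x.
Proof. by rewrite /congL subrr; apply: inL0. Qed.

Lemma congL_sym x y : congL u x y -> congL u y x.
Proof. by rewrite /congL => /inLN; rewrite opprB. Qed.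

Lemma congL_trans y x z : congL u x y -> congL u y z -> congL u x z.
Proof. by rewrite /congL => /inLD h /h; rewrite addrA subrK. Qed.

Lemma congLD x y x' y' : congL u x y -> congL u x' y' -> congL u (x + x') (y + y').
Proof.
rewrite /congL => /inLD h /h.
by rewrite (_ : x - y + (x' - y') = x + x' - (y + y')) //; vec_ring.
Qed.

Lemma congL_inP x y : inP u (x - y) -> congL u x y.
Proof. exact: inP_inL. Qed.

Lemma congL_lower_bound x y : congL u x y ->
  exists z, inP u (x - z) /\ inP u (y - z).
Proof.
move=> [c hc]; exists (x - \sum_i (absz (c i))%:Z *: u i); split.
  by exists (fun i => absz (c i)); rewrite opprB addrC subrK.
exists (fun i => absz ((absz (c i))%:Z - c i)).
rewrite (_ : y - _ = \sum_i (absz (c i))%:Z *: u i - (x - y)); last by vec_ring.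
rewrite hc -sumrB; apply: eq_bigr => i _; rewrite -scalerBl; congr (_ *: _).
rewrite !abszE; lia.
Qed.

Lemma common_lower_bound (T : eqType) (s : seq T) (Q : T -> 'rV[int]_d -> Prop) z :
  (forall t y y', inP u (y - y') -> Q t y -> Q t y') ->
  (forall t, exists y, congL u y z /\ Q t y) ->
  exists y, congL u y z /\ forall t, t \in s -> Q t y.
Proof.
move=> Qdown hQ; elim: s => [|t s [y [yz ys]]].
  by exists z; split=> //; apply: congL_refl.
have [y' [y'z y't]] := hQ t.
have [x [hy hy']] := congL_lower_bound (congL_trans y'z (congL_sym yz)).
exists x; split.
  exact: congL_trans (congL_sym (congL_inP hy')) yz.
move=> t'; rewrite in_cons => /predU1P [-> | /ys]; first exact: Qdown hy y't.
exact: Qdown hy'.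
Qed.

End Lattice.

Section IndependentGenerators.
Variables (d : nat) (u : 'I_d -> 'rV[int]_d).
Hypothesis hu : Zindep u.

Lemma coef_unique (a b : 'I_d -> int) :
  \sum_i a i *: u i = \sum_i b i *: u i -> forall i, a i = b i.
Proof.
move=> h i; apply/eqP; rewrite -subr_eq0; apply/eqP; move: i; apply: hu.
by under eq_bigr do rewrite scalerBl; rewrite sumrB h subrr.
Qed.

Lemma not_inP_opp_gen i : ~ inP u (- u i).
Proof.
move=> [c hc]; have := @hu (fun j => (c j)%:Z + (j == i)%:Z).
under eq_bigr do rewrite scalerDl.
rewrite big_split /= -hc (bigD1 i) //= eqxx scale1r big1 ?addr0 ?addNr; last first.
  by move=> j /negbTE ->; rewrite scale0r.
by move=> /(_ erefl i); rewrite eqxx; lia.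
Qed.

(* With U the matrix of rows u_i, the adjugate shows det U *: Z^d <= L, so residues
   modulo det U represent every class. *)
Lemma finite_index : exists s : seq 'rV[int]_d, forall x, exists r, r \in s /\ congL u x r.
Proof.
pose U := \matrix_(i, j) u i 0 j : 'M[int]_d.
have rowU i : row i U = u i by apply/rowP => j; rewrite !mxE.
have sum_rowU (v : 'rV[int]_d) : \sum_i v 0 i *: u i = v *m U.
  by rewrite mulmx_sum_row; apply: eq_bigr => i _; rewrite rowU.
have detU : \det U != 0.
  apply/negP => /det0P [v /negP v0 vU]; apply: v0; apply/eqP/rowP => j.
  by rewrite mxE; apply: hu; rewrite sum_rowU.
pose D := \det U.
have inL_D (q : 'rV[int]_d) : inL u (D *: q).
  by exists (fun i => (q *m \adj U) 0 i); rewrite sum_rowU -mulmxA mul_adj_mx mul_mx_scalar.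
pose row_of (f : {ffun 'I_d -> 'I_(absz D).+1}) : 'rV[int]_d := \row_j (f j : nat)%:Z.
exists (map row_of (enum {ffun 'I_d -> 'I_(absz D).+1})) => x.
exists (\row_j (modz (x 0 j) D)); split.
  have -> : \row_j (modz (x 0 j) D) = row_of [ffun j => inord (absz (modz (x 0 j) D))].
    apply/rowP => j; rewrite !mxE ffunE inordK; first by rewrite gez0_abs // modz_ge0.
    move: (ltz_mod (x 0 j) detU) (modz_ge0 (x 0 j) detU) => lt ge.
    by rewrite ltnS -lez_nat !abszE (ger0_norm ge) Order.POrderTheory.ltW.
  by apply: map_f; rewrite mem_enum.
rewrite /congL (_ : x - _ = D *: \row_j (divz (x 0 j) D)); first exact: inL_D.
by apply/rowP => j; rewrite !mxE {1}(divz_eq (x 0 j) D); ring.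
Qed.

Lemma finite_set_sub (X : 'rV[int]_d -> Prop) (s : seq 'rV[int]_d) :
  (forall x, X x -> x \in s) -> finite_set X.
Proof.
move=> Xs; exists [seq x <- s | if excluded_middle_informative (X x) then true else false].
by move=> x; rewrite mem_filter; case: excluded_middle_informative => [Xx | nXx]; split=> // /Xs.
Qed.

Lemma exists_transversal (K : 'rV[int]_d -> Prop) : exists M : 'rV[int]_d -> Prop,
  [/\ forall m, M m -> K m,
      forall x, K x -> exists m, M m /\ congL u m x,
      forall m m', M m -> M m' -> congL u m m' -> m = m'
    & finite_set M].
Proof.
pose rep x := epsilon (inhabits 0) (fun m => K m /\ congL u m x).
have rep_spec x : K x -> K (rep x) /\ congL u (rep x) x.
  move=> Kx; apply: (epsilon_spec (inhabits 0) (fun m => K m /\ congL u m x)).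
  by exists x; split=> //; apply: congL_refl.
have rep_congL x x' : congL u x x' -> rep x = rep x'.
  move=> xx'; congr (epsilon _ _); apply: functional_extensionality => m.
  apply: propositional_extensionality; split=> -[Km mx]; split=> //.
    exact: congL_trans mx xx'.
  exact: congL_trans mx (congL_sym xx').
exists (fun m => exists2 x, K x & m = rep x); split.
- by move=> _ [x /rep_spec [Kx _] ->].
- by move=> x Kx; exists (rep x); split; [exists x | apply: (rep_spec x Kx).2].
- move=> _ _ [x /rep_spec [_ h] ->] [x' /rep_spec [_ h'] ->] xx'; apply: rep_congL.
  exact: congL_trans (congL_trans (congL_sym h) xx') h'.
- have [s hs] := finite_index.
  apply: (@finite_set_sub _ (map rep s)) => _ [x _ ->].
  by have [r [rs /rep_congL ->]] := hs x; apply: map_f.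
Qed.

End IndependentGenerators.

Section DescentToCalW.
Variables (d : nat) (u : 'I_d -> 'rV[int]_d) (W : 'rV[int]_d -> Prop) (fs : seq 'rV[int]_d).
Hypothesis hu : Zindep u.
Hypothesis W_sub : forall x, W x -> exists f p, [/\ f \in fs, inP u p & x = f + p].

Lemma calW_addP v p : calW u W v -> inP u p -> W (v + p).
Proof.
move=> [Wv [nsv _]] hp; apply: NNPP => nWvp; apply: nsv; split=> // vP.
exact: nWvp (vP p hp).
Qed.

Lemma not_calW_descends v :
  W v -> ~ scrW u W v -> ~ calW u W v ->
  exists v' (g : 'I_d -> nat),
    [/\ W v', ~ scrW u W v', v - v' = \sum_i (g i)%:Z *: u i & (0 < \sum_i g i)%N].
Proof.
move=> Wv nsv ncv.
have [v' [[[p [[g hg] ->]] [Wv' nsv']] nvv']] : exists v',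
    ((exists p, inP u p /\ v' = v - p) /\ W v' /\ ~ scrW u W v') /\ v' <> v.
  apply: NNPP => none; apply: ncv; split=> //; split=> // v'; split.
    by move=> h; apply: NNPP => nvv'; apply: none; exists v'.
  by move=> ->; split=> //; exists 0; split; [apply: inP0 | rewrite subr0].
exists (v - p), g; split=> //; first by rewrite opprB addrC subrK.
rewrite lt0n sum_nat_eq0; apply/negP => /forallP g0; apply: nvv'.
by rewrite hg big1 ?subr0 // => i _; move: (g0 i) => /eqP ->; rewrite scale0r.
Qed.

(* Independence makes the P-coefficients of w - f unique, and W lies in finitely many
   translates f + P. *)
Lemma W_depth_bounded w : exists B, forall v (e : 'I_d -> nat),
  W v -> w - v = \sum_i (e i)%:Z *: u i -> (\sum_i e i <= B)%N.
Proof.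
have [B hB] : exists B, forall f, f \in fs -> forall g : 'I_d -> nat,
    w - f = \sum_i (g i)%:Z *: u i -> (\sum_i g i <= B)%N.
  elim: fs => [|f0 s [B IH]]; first by exists 0%N.
  have [[g0 hg0] | nog] :=
    classic (exists g0 : 'I_d -> nat, w - f0 = \sum_i (g0 i)%:Z *: u i).
  - exists (B + \sum_i g0 i)%N => f; rewrite in_cons => /predU1P [-> | fs_f] g hg.
      have g_g0 i : g i = g0 i by case: (coef_unique hu (etrans (esym hg) hg0) i).
      by rewrite (eq_bigr _ (fun i _ => g_g0 i)) leq_addl.
    exact: leq_trans (IH f fs_f g hg) (leq_addr _ _).
  - exists B => f; rewrite in_cons => /predU1P [-> | fs_f] g hg.
      by case: nog; exists g.
    exact: IH f fs_f g hg.
exists B => v e Wv he; have [f [p [fs_f [c hc] ev]]] := W_sub Wv.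
apply: leq_trans (hB f fs_f (fun i => e i + c i)%N _).
  by apply: leq_sum => i _; apply: leq_addr.
rewrite (_ : w - f = w - v + p); last by rewrite ev; vec_ring.
by rewrite he hc -big_split; apply: eq_bigr => i _; rewrite PoszD scalerDl.
Qed.

Lemma calW_below w : W w -> ~ scrW u W w -> exists v, calW u W v /\ inP u (w - v).
Proof.
move=> Ww nsw; have [B hB] := W_depth_bounded w.
(* Each descent step raises the depth sum e, which W_depth_bounded caps at B. *)
suff: forall n v (e : 'I_d -> nat), W v -> ~ scrW u W v ->
    w - v = \sum_i (e i)%:Z *: u i -> (B < \sum_i e i + n)%N ->
    exists v', calW u W v' /\ inP u (w - v').
  move=> /(_ B.+1 w (fun=> 0%N) Ww nsw); apply.
    by rewrite subrr big1 // => i _; rewrite scale0r.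
  by rewrite big1.
elim=> [|n IH] v e Wv nsv he lt_B; first by have := hB v e Wv he; lia.
have [cv | ncv] := classic (calW u W v); first by exists v; split=> //; exists e.
have [v' [g [Wv' nsv' hg g_gt0]]] := not_calW_descends Wv nsv ncv.
apply: (IH v' (fun i => e i + g i)%N Wv' nsv').
  rewrite (_ : w - v' = w - v + (v - v')); last by vec_ring.
  by rewrite he hg -big_split; apply: eq_bigr => i _; rewrite PoszD scalerDl.
rewrite big_split /=; move: lt_B g_gt0.
by set s1 := (\sum_i e i)%N; set s2 := (\sum_i g i)%N; lia.
Qed.

Lemma W_cases w0 (hW1 : forall w, scrW1 u W w <-> w = w0) w :
  W w -> (exists v, calW u W v /\ congL u w v) \/ w = w0.
Proof.
move=> Ww; have [sw | nsw] := classic (scrW u W w).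
  have [sw1 | nsw1] := classic (scrW1 u W w); first by right; apply/hW1.
  left; apply: NNPP => none; apply: nsw1; split=> // v cv wv; apply: none; exists v.
  by split.
have [v [cv wv]] := calW_below Ww nsw; left; exists v; split=> //; exact: congL_inP.
Qed.

End DescentToCalW.

Definition coinitial d (u : 'I_d -> 'rV[int]_d) (M : 'rV[int]_d -> Prop) m :=
  forall y, congL u y m -> exists m', [/\ M m', congL u m' m & inP u (y - m')].

Lemma eventually_periodic_support d (u : 'I_d -> 'rV[int]_d) W :
  eventually_periodic u W ->
  exists fs : seq 'rV[int]_d, forall x, W x -> exists f p, [/\ f \in fs, inP u p & x = f + p].
Proof.
move=> [_ [[F [_ [[fs hfs] hF]]] _]]; exists fs => x /hF [f [p [Ff [hp ->]]]].
by exists f, p; split=> //; apply/hfs.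
Qed.

Lemma minimal_complement_essential d (W M : 'rV[int]_d -> Prop) m :
  is_minimal_complement W M -> M m ->
  exists w, W w /\ forall m' w', M m' -> W w' -> m + w = m' + w' -> m' = m.
Proof.
move=> [[_ cover] minM] Mm; apply: NNPP => none.
have other w : W w -> exists m' w', [/\ M m', m' <> m, W w' & m + w = m' + w'].
  move=> Ww; apply: NNPP => h; apply: none; exists w; split=> // m' w' Mm' Ww' e.
  by apply: NNPP => ne; apply: h; exists m', w'.
have [_ [w [_ [Ww _]]]] := cover 0.
suff [_ /(_ erefl)] : M m /\ m <> m by [].
apply: (minM (fun x => M x /\ x <> m)) => //; first by move=> x [].
split; first by have [m' [w' [Mm' ne _ _]]] := other w Ww; exists m'.
move=> z; have [x [w' [Mx [Ww' ->]]]] := cover z.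
have [-> | ne] := classic (x = m); last by exists x, w'.
by have [m' [w'' [Mm' ne Ww'' e]]] := other w' Ww'; exists m', w''.
Qed.

Section Complements.
Variables (d : nat) (u : 'I_d -> 'rV[int]_d) (W : 'rV[int]_d -> Prop) (fs : seq 'rV[int]_d).
Hypothesis hu : Zindep u.
Hypothesis W_sub : forall x, W x -> exists f p, [/\ f \in fs, inP u p & x = f + p].
Variable w0 : 'rV[int]_d.
Hypothesis hW1 : forall w, scrW1 u W w <-> w = w0.

(* If not, each class z - f holding a non-coinitial point of M has a witness below which
   M misses that class, and a common lower bound y of these witnesses is not in M + W. *)
Lemma complement_coinitial_cover M : is_complement W M -> forall z,
  exists m w, [/\ M m, coinitial u M m, W w & congL u (m + w) z].
Proof.
move=> [_ cover] z; apply: NNPP => none.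
pose Q f y := forall m, M m -> congL u m (z - f) -> ~ coinitial u M m -> ~ inP u (y - f - m).
have [y [yz Qy]] : exists y, congL u y z /\ forall f, f \in fs -> Q f y.
  apply: common_lower_bound => [f y y' yy' Qfy m Mm mzf ncm y'fm | f].
    apply: (Qfy m Mm mzf ncm).
    by rewrite (_ : y - f - m = y - y' + (y' - f - m)); [apply: inPD | vec_ring].
  have [[m0 [Mm0 m0zf ncm0]] | nom] :=
    classic (exists m0, [/\ M m0, congL u m0 (z - f) & ~ coinitial u M m0]); last first.
    exists z; split=> [|m Mm mzf ncm]; first exact: congL_refl.
    by case: nom; exists m.
  have [y0 [y0m0 y0low]] : exists y0, congL u y0 m0 /\
      forall m, M m -> congL u m m0 -> ~ inP u (y0 - m).
    apply: NNPP => h; apply: ncm0 => y ym0; apply: NNPP => h2; apply: h.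
    by exists y; split=> // m Mm mm0 hp; apply: h2; exists m.
  exists (y0 + f); split.
    by rewrite -(subrK f z); apply: congLD (congL_trans y0m0 m0zf) (congL_refl u f).
  move=> m Mm mzf _; rewrite (_ : y0 + f - f - m = y0 - m); last by vec_ring.
  exact: y0low Mm (congL_trans mzf (congL_sym m0zf)).
have [m [w [Mm [Ww ey]]]] := cover y.
have [f [p [fs_f hp ew]]] := W_sub Ww.
apply: (Qy f fs_f m Mm _ _).
- rewrite /congL (_ : m - (z - f) = y - z - p); last by rewrite ey ew; vec_ring.
  exact: inLD yz (inLN (inP_inL hp)).
- by move=> cm; apply: none; exists m, w; split=> //; rewrite -ey.
- by rewrite (_ : y - f - m = p) //; rewrite ey ew; vec_ring.
Qed.

Lemma W_congL_calW_or_w0 w :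
  W w -> exists w', (calW u W w' \/ scrW1 u W w') /\ congL u w w'.
Proof.
move=> /(W_cases hu W_sub hW1) [[v [cv wv]] | ->]; first by exists v; split=> //; left.
by exists w0; split; [right; apply/hW1 | apply: congL_refl].
Qed.

Lemma complement_cover_calW M : is_complement W M -> forall z,
  exists m w, [/\ M m, coinitial u M m, calW u W w \/ scrW1 u W w & congL u (m + w) z].
Proof.
move=> /complement_coinitial_cover cover z.
have [m [w [Mm cm /W_congL_calW_or_w0 [w' [hw' ww']] mwz]]] := cover z.
exists m, w'; split=> //; apply: congL_trans mwz.
exact: congLD (congL_refl u m) (congL_sym ww').
Qed.

Lemma coinitial_calW_translate M m v x y0 :
  coinitial u M m -> calW u W v -> congL u x (m + v) -> congL u y0 m ->
  exists m', [/\ M m', congL u m' m, inP u (y0 - m') & W (x - m')].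
Proof.
move=> cm cv xmv y0m.
have xv_m : congL u (x - v) m.
  by rewrite -(addrK v m); apply: congLD xmv (congL_refl u (- v)).
have [y [xy y0y]] := congL_lower_bound (congL_trans xv_m (congL_sym y0m)).
have [m' [Mm' m'm ym']] := cm y (congL_trans (congL_sym (congL_inP y0y)) y0m).
exists m'; split=> //.
  by rewrite (_ : y0 - m' = y0 - y + (y - m')); [apply: inPD | vec_ring].
rewrite (_ : x - m' = v + (x - v - y + (y - m'))); last by vec_ring.
exact: calW_addP cv (inPD xy ym').
Qed.

(* The point m + w that only m covers must have w = w0: translates of calW are absorbed
   by points of M below m, which exist as m is coinitial. *)
Lemma minimal_complement_separates (hd : (0 < d)%N) M m m' w' :
  is_minimal_complement W M -> M m -> coinitial u M m -> coinitial u M m' ->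
  ~ congL u m m' -> calW u W w' \/ scrW1 u W w' -> ~ congL u (m + w0) (m' + w').
Proof.
move=> minM Mm cm cm' nmm' hw' mm'.
have [w [Ww ess]] := minimal_complement_essential minM Mm.
suff [m'' [Mm'' ne Wm'']] : exists m'', [/\ M m'', m'' <> m & W (m + w - m'')].
  by apply: ne; apply: ess Mm'' Wm'' _; rewrite [m'' + _]addrC subrK.
have [[v [cv wv]] | ew] := W_cases hu W_sub hW1 Ww.
  pose i := Ordinal hd.
  have [||m'' [Mm'' _ low Wm'']] :=
    coinitial_calW_translate (x := m + w) (y0 := m - u i) cm cv.
  - exact: congLD (congL_refl u m) wv.
  - by rewrite /congL (_ : m - u i - m = - u i); [apply: inLN; apply: inL_gen | vec_ring].
  exists m''; split=> // em''; apply: (not_inP_opp_gen hu (i := i)).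
  by rewrite (_ : - u i = m - u i - m''); [| rewrite em''; vec_ring].
rewrite ew; case: hw' => [cw' | /hW1 ew'].
  have [m'' [Mm'' m''m' _ Wm'']] := coinitial_calW_translate cm' cw' mm' (congL_refl u m').
  by exists m''; split=> // em''; apply: nmm'; rewrite -em''.
case: nmm'; move: mm'; rewrite ew' => /congLD /(_ (congL_refl u (- w0))).
by rewrite !addrK.
Qed.

Lemma class_union_minimal_complement M0 : (exists m, M0 m) ->
  (forall z, exists m w, M0 m /\ (calW u W w \/ scrW1 u W w) /\ congL u (m + w) z) ->
  (forall m m' w', M0 m -> M0 m' -> m' <> m -> calW u W w' \/ scrW1 u W w' ->
     ~ congL u (m + w0) (m' + w')) ->
  is_minimal_complement W (fun x => exists m, M0 m /\ congL u x m).
Proof.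
move=> [m0 M0m0] cover sep.
have [[Ww0 _] w0_not_calW] : scrW1 u W w0 by apply/hW1.
split.
  split; first by exists m0, m0; split=> //; apply: congL_refl.
  move=> z; have [m [w [M0m [hw mwz]]]] := cover z.
  exists (z - w), w; split; last by split; [case: hw => [[] | [[]]] | rewrite subrK].
  exists m; split=> //; rewrite -(addrK w m).
  exact: congLD (congL_sym mwz) (congL_refl u (- w)).
move=> M' M'sub [_ cover'] x [m [M0m xm]]; apply: NNPP => nM'x.
have [y [w' [M'y [Ww' ex]]]] := cover' (x + w0).
have [m' [M0m' ym']] := M'sub y M'y.
have [[v [cv w'v]] | ew'] := W_cases hu W_sub hW1 Ww'; last first.
  by apply: nM'x; rewrite (addIr w0 (etrans ex (congr1 _ ew'))).
have [em | nem] := classic (m' = m).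
  apply: (w0_not_calW v cv); apply: congL_trans w'v.
  have -> : w' = x + w0 - y by rewrite ex; vec_ring.
  rewrite /congL (_ : w0 - _ = y - x); last by vec_ring.
  by apply: congL_trans ym' _; rewrite em; apply: congL_sym.
apply: (sep m m' v M0m M0m' nem (or_introl cv)).
apply: congL_trans (congLD ym' w'v); rewrite -ex.
exact: congLD (congL_sym xm) (congL_refl u w0).
Qed.

End Complements.

Theorem theorem4p23 (d : nat) (hd : (0 < d)%N) (u : 'I_d -> 'rV[int]_d)
  (hu : Zindep u) (W : 'rV[int]_d -> Prop) (hW : eventually_periodic u W)
  (w0 : 'rV[int]_d) (hW1 : forall w, scrW1 u W w <-> w = w0) :
  (exists M : 'rV[int]_d -> Prop, is_minimal_complement W M) <->
  (exists M : 'rV[int]_d -> Prop,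
     nonempty M /\ finite_set M /\
     (forall m m', M m -> M m' -> congL u m m' -> m = m') /\
     (forall z : 'rV[int]_d, exists m w,
        M m /\ (calW u W w \/ scrW1 u W w) /\ congL u (m + w) z) /\
     (forall m, M m -> exists w, scrW1 u W w /\
        forall m' w', M m' -> m' <> m -> (calW u W w' \/ scrW1 u W w') ->
          ~ congL u (m + w) (m' + w'))).
Proof.
have [fs W_sub] := eventually_periodic_support hW.
split=> [[M minM] | [M0 [[m0 M0m0] [_ [_ [cover sep]]]]]]; last first.
  exists (fun x => exists m, M0 m /\ congL u x m).
  apply: (class_union_minimal_complement hu W_sub hW1) => [|//|m m' w' M0m].
    by exists m0.
  by have [w [/hW1 -> sep_m]] := sep m M0m; apply: sep_m.
have cover := complement_cover_calW hu W_sub hW1 minM.1.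
have [M0 [M0sub M0cover M0inj M0fin]] := exists_transversal hu (fun m => M m /\ coinitial u M m).
exists M0; split; [|split=> //; split=> //; split].
- have [m [w [Mm cm _ _]]] := cover 0.
  by have [m0 [M0m0 _]] := M0cover m (conj Mm cm); exists m0.
- move=> z; have [m [w [Mm cm hw mwz]]] := cover z.
  have [m0 [M0m0 m0m]] := M0cover m (conj Mm cm).
  exists m0, w; split=> //; split=> //.
  exact: congL_trans (congLD m0m (congL_refl u w)) mwz.
- move=> m M0m; exists w0; split=> [|m' w' M0m' ne]; first exact/hW1.
  have [Mm cm] := M0sub m M0m; have [_ cm'] := M0sub m' M0m'.
  apply: (minimal_complement_separates hu W_sub hW1 hd minM Mm cm cm').
  by move=> mm'; apply: ne; symmetry; apply: M0inj.
Qed.
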